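(* Let $E$ be finite, $\Omega=E^{\mathbb{Z}}$ with left shift $S$, and fix a letter $\mathtt a\in E$; write $\mathbf{a}$ for the configuration with all coordinates equal to $\mathtt a$. (i) If $\phi:\Omega\to\mathbb{R}$ is continuous with the extensibility property and $\rho^\phi$ denotes its cocycle $\rho^\phi(\xi,\eta)=\lim_{n\to\infty}\sum_{i=-n}^{n}[\phi(S^i\xi)-\phi(S^i\eta)]$ (defined for $\xi,\eta$ differing at finitely many sites), then the family $\gamma^\phi=(\gamma^\phi_\Lambda)_{\Lambda\subset\mathbb{Z}\text{ finite}}$ given by $$\gamma^\phi_\Lambda(\omega_\Lambda|\omega_{\Lambda^c})=\Big(\sum_{\xi_\Lambda\in E^\Lambda}e^{\rho^\phi(\xi_\Lambda\omega_{\mathbb{Z}\setminus\Lambda},\,\omega)}\Big)^{-1},\qquad\omega\in\Omega,$$ is a translation-invariant Gibbsian specification. (ii) If $\gamma=(\gamma_\Lambda)$ is a translation-invariant Gibbsian specification on $\Omega$, then $$\phi_\gamma(\omega)=\log\frac{\gamma_{\{0\}}(\omega_0\,|\,\mathbf a_{-\infty}^{-1}\omega_1^{\infty})}{\gamma_{\{0\}}(\mathtt a\,|\,\mathbf a_{-\infty}^{-1}\omega_1^{\infty})},\qquad\omega\in\Omega,$$ is a continuous function with the extensibility property and $\gamma^{\phi_\gamma}=\gamma$.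
   Context: $E$ finite, discrete; $\Omega=E^{\mathbb{Z}}$ with product topology; $(S\omega)_i=\omega_{i+1}$. For $\omega\in\Omega$, $a\in E$, $\omega^a$ is the configuration equal to $a$ at $0$ and $\omega_k$ at $k\ne0$. A continuous $\phi$ has the extensibility property if for all $a,\tilde a\in E$, $\sum_{i=-n}^{n}[\phi(S^i\omega^a)-\phi(S^i\omega^{\tilde a})]$ converges uniformly in $\omega$ as $n\to\infty$ (then the limit $\rho^\phi(\xi,\eta)$ exists for all $\xi,\eta$ differing at finitely many sites). $\mathbf a_{-\infty}^{-1}\omega_1^\infty$ denotes the condition on sites $\ne0$ equal to $\mathtt a$ at negative sites and to $\omega_k$ at sites $k\ge1$; for finite $\Lambda$, $\xi_\Lambda\omega_{\mathbb{Z}\setminus\Lambda}$ equals $\xi$ on $\Lambda$ and $\omega$ elsewhere. A specification is a family $(\gamma_\Lambda)_{\Lambda\text{ finite}}$ of probabilities $\gamma_\Lambda(\cdot|\omega_{\Lambda^c})$ on $E^\Lambda$ depending only on $\omega_{\Lambda^c}$, consistent: with $\gamma_\Lambda(f|\omega)=\sum_{\xi_\Lambda}\gamma_\Lambda(\xi_\Lambda|\omega_{\Lambda^c})f(\xi_\Lambda\omega_{\Lambda^c})$, for finite $\Delta\subset\Lambda$, $\sum_{\xi_\Lambda}\gamma_\Lambda(\xi_\Lambda|\omega_{\Lambda^c})\gamma_\Delta(f|\xi_\Lambda\omega_{\Lambda^c})=\gamma_\Lambda(f|\omega)$. Gibbsian means non-null ($\inf_\omega\gamma_\Lambda(\omega_\Lambda|\omega_{\Lambda^c})>0$)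 and continuous ($\omega\mapsto\gamma_\Lambda(\omega_\Lambda|\omega_{\Lambda^c})$ continuous) for every finite $\Lambda$. Translation-invariant means $\gamma_{\Lambda+1}(\omega_{\Lambda+1}|\omega_{(\Lambda+1)^c})=\gamma_\Lambda((S\omega)_\Lambda|(S\omega)_{\Lambda^c})$ for all finite $\Lambda$ and $\omega$. *)

From HB Require Import structures.
From mathcomp Require Import all_boot all_order all_algebra.
From mathcomp Require Import finmap.
From mathcomp Require Import all_classical all_reals all_analysis.

Set Implicit Arguments. Unset Strict Implicit. Unset Printing Implicit Defensive.
Import Order.TTheory GRing.Theory Num.Theory.
Import numFieldNormedType.Exports.
Local Open Scope ring_scope.

Section Defs.
Variables (E : finType) (R : realType).

Definition config := int -> E.

Definition shiftn (i : int) (w : config) : config := fun k => w (k + i).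
Definition shift : config -> config := shiftn 1.

Definition upd (w : config) (k : int) (a : E) : config :=
  fun j => if j == k then a else w j.

Definition glue (L : {fset int}) (xi : {ffun L -> E}) (w : config) : config :=
  fun k => match (insub k : option L) with Some k' => xi k' | None => w k end.

Definition psum (f : int -> R) (n : nat) : R :=
  \sum_(i < (2 * n).+1) f (i%:Z - n%:Z).

(* continuity for the product topology of E^Z (E finite, discrete):
   cylinder sets fixing the coordinates in [-N,N] form a neighbourhood base *)
Definition cont (f : config -> R) : Prop :=
  forall (w : config) (eps : R), 0 < eps -> exists N : nat,
    forall w' : config, (forall k : int, `|k| <= N%:Z -> w' k = w k) ->
      `|f w' - f w| < eps.

Definition ext_prop (phi : config -> R) : Prop :=
  forall a b : E, exists Lim : config -> R,
    forall eps : R, 0 < eps -> exists N : nat, forall n : nat, (N <= n)%N ->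
      forall w : config,
        `| psum (fun i => phi (shiftn i (upd w 0 a)) - phi (shiftn i (upd w 0 b))) n
           - Lim w | < eps.

Definition rho (phi : config -> R) (xi eta : config) : R :=
  limn (fun n => psum (fun i => phi (shiftn i xi) - phi (shiftn i eta)) n).

(* specification encoded as gam L w = gamma_L(w_L | w_(L^c)) ;
   hence gamma_L(xi_L | w_(L^c)) = gam L (glue xi w) *)
Definition cond_exp (gam : {fset int} -> config -> R) (L : {fset int})
    (f : config -> R) (w : config) : R :=
  \sum_(xi : {ffun L -> E}) gam L (glue xi w) * f (glue xi w).

Definition is_specification (gam : {fset int} -> config -> R) : Prop :=
  [/\ forall (L : {fset int}) (w : config), 0 <= gam L w,
      forall (L : {fset int}) (w : config), \sum_(xi : {ffun L -> E}) gam L (glue xi w) = 1 &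
      forall (L D : {fset int}), fsubset D L -> forall (f : config -> R) (w : config),
        \sum_(xi : {ffun L -> E}) gam L (glue xi w) * cond_exp gam D f (glue xi w)
        = cond_exp gam L f w].

Definition non_null (gam : {fset int} -> config -> R) : Prop :=
  forall L : {fset int}, exists c : R, 0 < c /\ forall w, c <= gam L w.

Definition spec_continuous (gam : {fset int} -> config -> R) : Prop :=
  forall L : {fset int}, cont (gam L).

Definition is_gibbsian (gam : {fset int} -> config -> R) : Prop :=
  [/\ is_specification gam, non_null gam & spec_continuous gam].

Definition translation_invariant (gam : {fset int} -> config -> R) : Prop :=
  forall (L : {fset int}) (w : config),
    gam [fset (k + 1)%R | k in L]%fset w = gam L (shift w).

Definition TI_gibbsian (gam : {fset int} -> config -> R) : Prop :=
  is_gibbsian gam /\ translation_invariant gam.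

Definition gammaphi (phi : config -> R) (L : {fset int}) (w : config) : R :=
  (\sum_(xi : {ffun L -> E}) expR (rho phi (glue xi w) w))^-1.

Definition cond_a (a : E) (w : config) : config :=
  fun k => if k < 0 then a else w k.

Definition phi_gamma (gam : {fset int} -> config -> R) (a : E) (w : config) : R :=
  ln (gam [fset (0 : int)]%fset (cond_a a w) / gam [fset (0 : int)]%fset (upd (cond_a a w) 0 a)).

End Defs.

(* (i) Let rho_n(xi, eta) be the partial sums sum_{|i| <= n} [phi(S^i xi) - phi(S^i eta)].
   On pairs differing only inside a fixed finite set L they converge uniformly.  For a
   single site j this is the extensibility property transported by S^j: shifting moves
   the summation window by |j|, and the 2|j| boundary terms are uniformly small because
   phi is uniformly continuous on the compact space E^Z.  Uniform convergence on L1 and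
   on L2 gives it on L1 `|` L2 by changing first the sites of L1 and then those of L2.
   Hence rho^phi is a bounded, continuous, shift-invariant cocycle, and gamma^phi is the
   Gibbs kernel exp(rho(xi, w)) / Z; consistency is a reindexing of the double sum by an
   involution.
   (ii) Consistency of gamma gives gamma_L(xi) / gamma_L(eta) = gamma_D(xi) / gamma_D(eta)
   when xi, eta differ only in D, a subset of L.  With translation invariance,
   phi_gamma(S^i w) is the log-ratio of gamma_L at w with the a-boundary pushed to i and
   to i + 1, so the partial sums telescope to ln gamma_L(xi) - ln gamma_L(eta) up to an
   error that vanishes uniformly by continuity of gamma_L.  Thus
   rho^{phi_gamma}(xi, eta) = ln (gamma_L(xi) / gamma_L(eta)), and normalization of
   gamma gives gamma^{phi_gamma} = gamma. *)

From Pilot Require Import Defs.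
From HB Require Import structures.
From mathcomp Require Import all_boot all_order all_algebra.
From mathcomp Require Import finmap.
From mathcomp Require Import all_classical all_reals all_analysis.
From mathcomp Require Import zify ring lra.
Import Order.TTheory GRing.Theory Num.Theory.
Import numFieldNormedType.Exports.
Local Open Scope classical_set_scope.
Local Open Scope ring_scope.
Set Implicit Arguments. Unset Strict Implicit. Unset Printing Implicit Defensive.

Local Notation glue := Defs.glue.
Local Notation shift := Defs.shift.

Section SequentialCompactness.
Variables (T : countType) (E : finType).

Definition infinitely_often (P : nat -> Prop) := forall m, exists2 n, (m <= n)%N & P n.

Lemma infinitely_often_pigeonhole (P : nat -> Prop) (c : nat -> E) :
  infinitely_often P -> exists e, infinitely_often (fun n => P n /\ c n = e).
Proof.
move=> infP; apply: contrapT => /forallNP noval.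
have /choice[m mP] : forall e, exists k, forall n, (k <= n)%N -> ~ (P n /\ c n = e).
  move=> e; have /existsNP[k kP] := noval e.
  by exists k => n kn Pn; apply: kP; exists n.
have [n mn Pn] := infP (\max_e m e).
by apply: (mP (c n) n) => //; exact: leq_trans (leq_bigmax (c n)) mn.
Qed.

Variable u : nat -> T -> E.

Definition refine_at (P : nat -> Prop) (t : T) : E :=
  odflt (u 0 t) [pick e | `[< infinitely_often (fun n => P n /\ u n t = e) >] ].

Lemma refine_atP P t : infinitely_often P ->
  infinitely_often (fun n => P n /\ u n t = refine_at P t).
Proof.
move=> infP; rewrite /refine_at; case: pickP => [e /asboolP //|none].
have [e infe] := infinitely_often_pigeonhole (u ^~ t) infP.
by move: (none e); rewrite asboolT.
Qed.

(* Diagonal extraction: stage k.+1 keeps those indices of stage k at which coordinate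
   unpickle k takes a value that it takes infinitely often. *)
Fixpoint stage (k : nat) : nat -> Prop :=
  if k is k'.+1 then
    if (choice.unpickle k' : option T) is Some t
    then fun n => stage k' n /\ u n t = refine_at (stage k') t
    else stage k'
  else fun _ => True.

Lemma stage_io k : infinitely_often (stage k).
Proof.
elim: k => [m|k IH] /=; first by exists m.
by case: (choice.unpickle k) => [t|//]; exact: refine_atP.
Qed.

Lemma stage_decr k k' n : (k <= k')%N -> stage k' n -> stage k n.
Proof.
elim: k' => [|k' IH]; first by rewrite leqn0 => /eqP ->.
rewrite leq_eqVlt => /orP[/eqP -> //|kk'] st; apply: IH kk' _.
by move: st => /=; case: (choice.unpickle k') => // t [].
Qed.

Definition cluster_point (t : T) : E := refine_at (stage (choice.pickle t)) t.

Lemma cluster_pointP (s : seq T) m :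
  exists2 n, (m <= n)%N & {in s, forall t, u n t = cluster_point t}.
Proof.
have [n mn stn] := stage_io (\max_(t <- s) (choice.pickle t).+1) m.
exists n => // t ts.
have /= := stage_decr (leq_bigmax_seq t ts isT) stn.
by rewrite choice.pickleK => -[].
Qed.

End SequentialCompactness.

Section UniformConvergence.
Variables (R : realType) (X : Type).
Implicit Types (P : X -> Prop) (F : nat -> X -> R) (G : X -> R).

Definition unif_cvg P F G := forall eps, 0 < eps ->
  exists N, forall n, (N <= n)%N -> forall x, P x -> `|F n x - G x| < eps.

Lemma unif_cvg_cvg P F G x : unif_cvg P F G -> P x -> F ^~ x @ \oo --> G x.
Proof.
move=> FG Px; apply/cvgrPdist_lt => eps eps0.
by have [N FN] := FG eps eps0; exists N => // n /= Nn; rewrite distrC; exact: FN.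
Qed.

Lemma unif_cvg_lim P F G x : unif_cvg P F G -> P x -> G x = limn (F ^~ x).
Proof. by move=> FG Px; apply/esym/cvg_lim => //; exact: unif_cvg_cvg FG Px. Qed.

Lemma unif_cvg_limn P F G : unif_cvg P F G -> unif_cvg P F (fun x => limn (F ^~ x)).
Proof.
move=> FG eps eps0; have [N FN] := FG eps eps0.
by exists N => n Nn x Px; rewrite -(unif_cvg_lim FG Px); exact: FN.
Qed.

Lemma eq_unif_cvg P F F' G G' :
  (forall n x, P x -> F n x = F' n x) -> (forall x, P x -> G x = G' x) ->
  unif_cvg P F G -> unif_cvg P F' G'.
Proof.
move=> FF' GG' FG eps eps0; have [N FN] := FG eps eps0.
by exists N => n Nn x Px; rewrite -FF' // -GG' //; exact: FN.
Qed.

Lemma unif_cvg_sub P P' F G : (forall x, P' x -> P x) -> unif_cvg P F G -> unif_cvg P' F G.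
Proof.
move=> P'P FG eps eps0; have [N FN] := FG eps eps0.
by exists N => n Nn x /P'P; exact: FN.
Qed.

Lemma unif_cvgD P F1 F2 G1 G2 : unif_cvg P F1 G1 -> unif_cvg P F2 G2 ->
  unif_cvg P (fun n x => F1 n x + F2 n x) (fun x => G1 x + G2 x).
Proof.
move=> FG1 FG2 eps eps0.
have [N1 FN1] := FG1 (eps / 2) ltac:(lra); have [N2 FN2] := FG2 (eps / 2) ltac:(lra).
exists (maxn N1 N2) => n; rewrite geq_max => /andP[N1n N2n] x Px.
have := FN1 n N1n x Px; have := FN2 n N2n x Px.
have := ler_normD (F1 n x - G1 x) (F2 n x - G2 x).
have -> : F1 n x - G1 x + (F2 n x - G2 x) = F1 n x + F2 n x - (G1 x + G2 x) by ring.
lra.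
Qed.

End UniformConvergence.

Lemma unif_cvg_comp (R : realType) (X Y : Type) (Q : Y -> Prop) (f : Y -> X)
    (P : X -> Prop) (F : nat -> X -> R) (G : X -> R) :
  (forall y, Q y -> P (f y)) -> unif_cvg P F G ->
  unif_cvg Q (fun n y => F n (f y)) (fun y => G (f y)).
Proof.
move=> QP FG eps eps0; have [N FN] := FG eps eps0.
by exists N => n Nn y /QP; exact: FN.
Qed.

Lemma unif_cvg_fin (R : realType) (X : Type) (I : finType) (P : I -> X -> Prop)
    (F : I -> nat -> X -> R) (G : I -> X -> R) :
  (forall i, unif_cvg (P i) (F i) (G i)) ->
  unif_cvg (fun p : I * X => P p.1 p.2) (fun n p => F p.1 n p.2) (fun p => G p.1 p.2).
Proof.
move=> FG eps eps0.
have /choice[N FN] := fun i => FG i eps eps0.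
exists (\max_i N i) => n Nn [i x] /= Px.
by apply: FN Px; exact: leq_trans (leq_bigmax i) Nn.
Qed.

Section PartialSums.
Variable R : realType.
Implicit Types (f g h : int -> R).

Lemma eq_psum f g n : f =1 g -> psum f n = psum g n.
Proof. by move=> fg; apply: eq_bigr => i _; rewrite fg. Qed.

Lemma psumD f g n : psum (fun i => f i + g i) n = psum f n + psum g n.
Proof. by rewrite /psum big_split. Qed.

Lemma psum_bound f c n : (forall i, `|f i| <= c) -> `|psum f n| <= (2 * n).+1%:R * c.
Proof.
move=> fc; apply: le_trans (ler_norm_sum _ _ _) _.
have -> : (2 * n).+1%:R * c = \sum_(i < (2 * n).+1) c by rewrite sumr_const card_ord mulr_natl.
exact: ler_sum.
Qed.

Lemma psum_shift1 h n : psum (fun i => h (i + 1)) n = psum h n + h (n%:Z + 1) - h (- n%:Z).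
Proof.
pose S := \sum_(i < (2 * n).+2) h (i%:Z - n%:Z).
have S_r : S = psum h n + h (n%:Z + 1).
  by rewrite /S big_ord_recr /=; congr (_ + h _); lia.
have S_l : S = h (- n%:Z) + psum (fun i => h (i + 1)) n.
  rewrite /S big_ord_recl /=; congr (h _ + _); first lia.
  by apply: eq_bigr => i _; congr h; rewrite /bump /=; lia.
lra.
Qed.

Lemma psum_shift_nat h (M d n : nat) eps :
  (forall i, M%:Z < `|i| -> `|h i| <= eps) -> (M + d <= n)%N ->
  `|psum (fun i => h (i + d%:Z)) n - psum h n| <= (2 * d)%:R * eps.
Proof.
move=> hsmall; elim: d => [|d IH] Mdn.
  by rewrite (@eq_psum _ h) ?subrr ?normr0 ?mul0r // => i; rewrite addr0.
have -> : psum (fun i => h (i + d.+1%:Z)) n - psum h n =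
    h (n%:Z + 1 + d%:Z) - h (- n%:Z + d%:Z) + (psum (fun i => h (i + d%:Z)) n - psum h n).
  have /= shift1 := psum_shift1 (fun k => h (k + d%:Z)) n.
  rewrite (@eq_psum _ (fun i => h (i + 1 + d%:Z))) ?shift1; first ring.
  by move=> i; congr h; lia.
have := IH ltac:(lia); have := hsmall (n%:Z + 1 + d%:Z) ltac:(lia).
have := hsmall (- n%:Z + d%:Z) ltac:(lia).
set x := h (_ + 1 + _); set y := h (- _ + _); set sd := psum _ n - psum h n.
have := ler_normD (x - y) sd; have := ler_normB x y.
rewrite !natrM mulrSr; lra.
Qed.

Lemma psum_shift h (M n : nat) (j : int) eps :
  (forall i, M%:Z < `|i| -> `|h i| <= eps) -> (M + 2 * `|j| <= n)%N ->
  `|psum (fun i => h (i + j)) n - psum h n| <= (2 * `|j|)%:R * eps.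
Proof.
case: j => d hsmall Mjn; first by apply: psum_shift_nat hsmall _; lia.
rewrite NegzE abszN /=.
have hsmall' i : (M + d.+1)%N%:Z < `|i| -> `|h (i - d.+1%:Z)| <= eps.
  by move=> Mi; apply: hsmall; lia.
rewrite distrC (@eq_psum h (fun i => h (i + d.+1%:Z - d.+1%:Z))); last by move=> i; rewrite addrK.
apply: (psum_shift_nat (h := fun i => h (i - d.+1%:Z)) hsmall').
by move: Mjn; rewrite NegzE abszN /=; lia.
Qed.

End PartialSums.

Section ProductTopology.
Variables (E : finType) (R : realType).
Local Notation config := (config E).
Implicit Types (u v w : config) (f g : config -> R).

Definition agree (N : nat) v w := forall k : int, `|k| <= N%:Z -> v k = w k.

Lemma agree_sym N v w : agree N v w -> agree N w v.
Proof. by move=> vw k kN; rewrite vw. Qed.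

Lemma agree_trans N u v w : agree N u v -> agree N v w -> agree N u w.
Proof. by move=> uv vw k kN; rewrite uv // vw. Qed.

Lemma agree_le N N' v w : (N <= N')%N -> agree N' v w -> agree N v w.
Proof. by move=> NN' vw k kN; apply: vw; lia. Qed.

Definition window (N : nat) : seq int := [seq i%:Z - N%:Z | i <- iota 0 (2 * N).+1].

Lemma mem_window N k : `|k| <= N%:Z -> k \in window N.
Proof.
move=> kN; apply/mapP; exists (absz (k + N%:Z)); last lia.
by rewrite mem_iota; lia.
Qed.

Lemma exists_cluster (u : nat -> config) :
  exists w, forall N m, exists2 n, (m <= n)%N & agree N (u n) w.
Proof.
exists (cluster_point u) => N m; have [n mn un] := cluster_pointP u (window N) m.
by exists n => // k /mem_window /un.
Qed.

Lemma cont_uniform f : cont f ->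
  forall eps, 0 < eps -> exists N, forall v w, agree N v w -> `|f v - f w| < eps.
Proof.
move=> cf eps eps0; apply: contrapT => /forallNP bad.
have /choice[p pP] : forall N, exists q : config * config,
    agree N q.1 q.2 /\ eps <= `|f q.1 - f q.2|.
  move=> N; have /existsNP[v /existsNP[w /not_implyP[vw fvw]]] := bad N.
  by exists (v, w); split => //; rewrite leNgt; apply/negP.
have [w wP] := exists_cluster (fun N => (p N).1).
have [K fK] := cf w (eps / 2) ltac:(lra).
have [n Kn agn] := wP K K; have [pn fpn] := pP n.
have agn' : agree K (p n).2 w.
  exact: agree_trans (agree_sym (agree_le Kn pn)) agn.
have := fK _ agn; have := fK _ agn'.
have := ler_normB (f (p n).1 - f w) (f (p n).2 - f w).
have -> : f (p n).1 - f w - (f (p n).2 - f w) = f (p n).1 - f (p n).2 by ring.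
lra.
Qed.

Lemma cont_bounded f : cont f -> exists M, forall w, `|f w| <= M.
Proof.
move=> cf; apply: contrapT => /forallNP bad.
have /choice[p pP] : forall n : nat, exists w, n%:R < `|f w|.
  by move=> n; have /existsNP[w fw] := bad n%:R; exists w; rewrite ltNge; apply/negP.
have [w wP] := exists_cluster p.
have [K fK] := cf w 1 ltr01.
pose m := Num.Def.archi_bound (`|f w| + 1).
have [n Kn agn] := wP K (maxn K m).
have mn : m%:R <= n%:R :> R by rewrite ler_nat; exact: leq_trans (leq_maxr _ _) Kn.
have := archi_boundP (addr_ge0 (normr_ge0 (f w)) ler01).
have := fK _ agn; have := pP n; have := ler_normD (f (p n) - f w) (f w).
rewrite subrK; lra.
Qed.

Lemma cont_const (c : R) : cont (fun _ : config => c).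
Proof. by move=> w eps eps0; exists 0%N => w' _; rewrite subrr normr0. Qed.

Lemma cont_add f g : cont f -> cont g -> cont (fun w => f w + g w).
Proof.
move=> cf cg w eps eps0.
have [N1 fN1] := cf w (eps / 2) ltac:(lra); have [N2 gN2] := cg w (eps / 2) ltac:(lra).
exists (maxn N1 N2) => w' ww'.
have := fN1 w' (agree_le (leq_maxl _ _) ww'); have := gN2 w' (agree_le (leq_maxr _ _) ww').
have := ler_normD (f w' - f w) (g w' - g w).
have -> : f w' - f w + (g w' - g w) = f w' + g w' - (f w + g w) by ring.
lra.
Qed.

Lemma cont_opp f : cont f -> cont (fun w => - f w).
Proof.
move=> cf w eps eps0; have [N fN] := cf w eps eps0.
by exists N => w' ww'; rewrite -opprD normrN; exact: fN.
Qed.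

Lemma cont_sub f g : cont f -> cont g -> cont (fun w => f w - g w).
Proof. by move=> cf cg; apply: cont_add => //; exact: cont_opp. Qed.

Lemma cont_sum (I : Type) (s : seq I) (F : I -> config -> R) :
  (forall i, cont (F i)) -> cont (fun w => \sum_(i <- s) F i w).
Proof.
move=> cF; elim: s => [|i s IH].
  by under eq_fun do rewrite big_nil; exact: cont_const.
by under eq_fun do rewrite big_cons; exact: cont_add.
Qed.

Lemma cont_continuous_comp (h : R -> R) f :
  cont f -> (forall w, {for f w, continuous h}) -> cont (fun w => h (f w)).
Proof.
move=> cf ch w eps eps0.
have /cvgrPdist_lt/(_ eps eps0)/nbhs_ballP[d /= d0 hd] := ch w.
have [N fN] := cf w d d0.
by exists N => w' ww'; rewrite distrC; apply: hd; rewrite -ball_normE /= distrC; exact: fN.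
Qed.

Definition window_local (T : config -> config) :=
  forall M : nat, exists N : nat, forall v w, agree N v w -> agree M (T v) (T w).

Lemma cont_comp f (T : config -> config) : cont f -> window_local T -> cont (fun w => f (T w)).
Proof.
move=> cf lT w eps eps0; have [M fM] := cf (T w) eps eps0.
by have [N TN] := lT M; exists N => w' ww'; exact/fM/TN.
Qed.

Lemma window_local_comp T1 T2 :
  window_local T1 -> window_local T2 -> window_local (fun w => T1 (T2 w)).
Proof.
move=> l1 l2 M; have [N1 T1N1] := l1 M; have [N2 T2N2] := l2 N1.
by exists N2 => v w vw; exact/T1N1/T2N2.
Qed.

Lemma window_local_shiftn i : window_local (shiftn i).
Proof. by move=> M; exists (M + `|i|)%N => v w vw k kM; apply: vw; lia. Qed.

Lemma window_local_pointwise (T : config -> config) :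
  (forall v w k, v k = w k -> T v k = T w k) -> window_local T.
Proof. by move=> Tk M; exists M => v w vw k kM; exact/Tk/vw. Qed.

Lemma cont_unif_lim (F : nat -> config -> R) G :
  (forall n, cont (F n)) -> unif_cvg (fun _ => True) F G -> cont G.
Proof.
move=> cF FG w eps eps0.
have [n Fn] := FG (eps / 3) ltac:(lra).
have [N FN] := cF n w (eps / 3) ltac:(lra).
exists N => w' ww'.
have := Fn n (leqnn n) w I; have := Fn n (leqnn n) w' I; have := FN w' ww'.
have := ler_normD (F n w' - F n w) (F n w - G w).
have := ler_normD (G w' - F n w') (F n w' - F n w + (F n w - G w)).
rewrite distrC.
have -> : G w' - F n w' + (F n w' - F n w + (F n w - G w)) = G w' - G w by ring.
lra.
Qed.

End ProductTopology.




Section Configurations.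
Variable E : finType.
Local Notation config := (config E).
Implicit Types (u v w xi eta : config) (L : {fset int}).

Lemma shiftn0 w : shiftn 0 w = w.
Proof. by apply: funext => k; rewrite /shiftn addr0. Qed.

Lemma shiftnD i j w : shiftn i (shiftn j w) = shiftn (i + j) w.
Proof. by apply: funext => k; rewrite /shiftn addrA. Qed.

Lemma shiftn_upd j v (e : E) : shiftn (- j) (upd (shiftn j v) 0 e) = upd v j e.
Proof. by apply: funext => k; rewrite /shiftn /upd subr_eq0 subrK. Qed.

Definition off L xi eta := forall k, k \notin L -> xi k = eta k.

Lemma off_refl L xi : off L xi xi.
Proof. by []. Qed.

Lemma off_sym L xi eta : off L xi eta -> off L eta xi.
Proof. by move=> xe k kL; rewrite xe. Qed.

Lemma off_trans L L' u v w : off L u v -> off L' v w -> off (L `|` L')%fset u w.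
Proof. by move=> uv vw k; rewrite in_fsetU negb_or => /andP[kL kL']; rewrite uv // vw. Qed.

Lemma off_sub L L' xi eta : fsubset L L' -> off L xi eta -> off L' xi eta.
Proof. by move=> /fsubsetP LL' xe k kL'; apply: xe; apply: contra kL'; exact: LL'. Qed.

Lemma off_upd w j (a b : E) : off [fset j]%fset (upd w j a) (upd w j b).
Proof. by move=> k; rewrite in_fset1 /upd => /negbTE ->. Qed.

Lemma upd_off1 j xi eta : off [fset j]%fset xi eta -> upd xi j (eta j) = eta.
Proof.
move=> xe; apply: funext => k; rewrite /upd; case: eqP => [-> //|/eqP kj].
by apply: xe; rewrite in_fset1.
Qed.

Lemma upd_id j w : upd w j (w j) = w.
Proof. by apply: funext => k; rewrite /upd; case: eqP => [->|]. Qed.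

Lemma fset_bound L : exists K : nat, forall k, k \in L -> `|k| <= K%:Z.
Proof.
exists (\max_(k <- L) `|k|)%N => k kL.
suff : (`|k| <= \max_(k <- L) `|k|)%N by lia.
exact: leq_bigmax_seq.
Qed.

Lemma glue_in L (x : {ffun L -> E}) w (k : L) : glue x w (val k) = x k.
Proof. by rewrite /glue valK. Qed.

Lemma glue_out L (x : {ffun L -> E}) w k : k \notin L -> glue x w k = w k.
Proof. by move=> kL; rewrite /glue insubN. Qed.

Lemma glue_glue L (x y : {ffun L -> E}) w : glue y (glue x w) = glue y w.
Proof. by apply: funext => k; rewrite /glue; case: insub. Qed.

Lemma off_glue L (x : {ffun L -> E}) w : off L (glue x w) w.
Proof. by move=> k kL; rewrite glue_out. Qed.

Definition restr L w : {ffun L -> E} := [ffun k => w (val k)].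

Lemma restr_glue L (x : {ffun L -> E}) w : restr L (glue x w) = x.
Proof. by apply/ffunP => k; rewrite ffunE glue_in. Qed.

Lemma glue_restr L u w : off L u w -> glue (restr L u) w = u.
Proof.
move=> uw; apply: funext => k; rewrite /glue; case: insubP => [k' _ <-|kL].
  by rewrite ffunE.
by rewrite uw.
Qed.

Lemma glue_off L (x : {ffun L -> E}) u v : off L u v -> glue x u = glue x v.
Proof. by move=> uv; rewrite -[in RHS](glue_restr (off_sym uv)) glue_glue. Qed.

Lemma window_local_upd j (e : E) : window_local (fun w => upd w j e).
Proof. by apply: window_local_pointwise => v w k; rewrite /upd; case: ifP. Qed.

Lemma window_local_glue L (x : {ffun L -> E}) : window_local (glue x).
Proof. by apply: window_local_pointwise => v w k; rewrite /glue; case: insub. Qed.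

Lemma window_local_cond_a (e : E) : window_local (cond_a e).
Proof. by apply: window_local_pointwise => v w k; rewrite /cond_a; case: ifP. Qed.

End Configurations.

Section Cocycle.
Variables (E : finType) (R : realType) (phi : config E -> R).
Hypotheses (phi_cont : cont phi) (phi_ext : ext_prop phi).
Local Notation config := (config E).
Implicit Types (xi eta : config) (L : {fset int}).

Definition dphi xi eta (i : int) : R := phi (shiftn i xi) - phi (shiftn i eta).

Lemma psum_dphi_split u v w n :
  psum (dphi u w) n = psum (dphi u v) n + psum (dphi v w) n.
Proof. by rewrite -psumD; apply: eq_psum => i; rewrite /dphi; ring. Qed.

Definition offp L (p : config * config) := off L p.1 p.2.

Definition rho_unif_on L :=
  unif_cvg (offp L) (fun n p => psum (dphi p.1 p.2) n) (fun p => rho phi p.1 p.2).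

Lemma dphi_tail L eps : 0 < eps -> exists M : nat, forall xi eta, off L xi eta ->
  forall i, M%:Z < `|i| -> `|dphi xi eta i| <= eps.
Proof.
move=> eps0; have [N phiN] := cont_uniform phi_cont eps0; have [K LK] := fset_bound L.
exists (N + K)%N => xi eta xe i Ni; apply/ltW/phiN => k kN.
by apply: xe; apply/negP => /LK; lia.
Qed.

Lemma psum_dphi_shiftn L j :
  unif_cvg (offp L) (fun n p => psum (dphi (shiftn j p.1) (shiftn j p.2)) n
                                 - psum (dphi p.1 p.2) n) (fun _ => 0).
Proof.
move=> eps eps0; set k : R := (2 * `|j|)%:R; pose c := eps / (k + 1).
have c0 : 0 < c by rewrite divr_gt0 // ltr_pwDr.
have kc : k * c < eps.
  have : (k + 1) * c = eps by rewrite mulrC divfK // lt0r_neq0 // ltr_pwDr.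
  rewrite mulrDl mul1r; lra.
have [M dM] := dphi_tail L c0.
exists (M + 2 * `|j|)%N => n Mn [xi eta] /= xe; rewrite subr0.
rewrite (@eq_psum _ _ (fun i => dphi xi eta (i + j))) => [|i]; last by rewrite /dphi !shiftnD.
exact: le_lt_trans (psum_shift (dM _ _ xe) Mn) kc.
Qed.

Lemma rho_unif_site0 (a b : E) :
  unif_cvg (fun _ => True) (fun n w => psum (dphi (upd w 0 a) (upd w 0 b)) n)
    (fun w => rho phi (upd w 0 a) (upd w 0 b)).
Proof.
have [Lim ab] := phi_ext a b; apply: (unif_cvg_limn (G := Lim)) => eps eps0.
by have [N abN] := ab eps eps0; exists N => n Nn w _; exact: abN.
Qed.

Lemma rho_unif_site j (a b : E) :
  unif_cvg (fun _ => True) (fun n v => psum (dphi (upd v j a) (upd v j b)) n)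
    (fun v => rho phi (upd v j a) (upd v j b)).
Proof.
pose f v := (upd (shiftn j v) 0 a, upd (shiftn j v) 0 b).
have offf v : True -> offp [fset 0]%fset (f v).
  by move=> _; exact: off_upd.
have U := unif_cvgD (unif_cvg_comp offf (psum_dphi_shiftn [fset 0]%fset (- j)))
  (unif_cvg_comp (fun _ _ => I) (rho_unif_site0 a b) (f := shiftn j)).
apply: unif_cvg_limn; apply: eq_unif_cvg U => // n v _.
by rewrite /= !shiftn_upd subrK.
Qed.

Lemma rho_unif1 j : rho_unif_on [fset j]%fset.
Proof.
have U := unif_cvg_fin (fun ab : E * E => rho_unif_site j ab.1 ab.2).
have := unif_cvg_comp (Q := offp [fset j]%fset) (fun _ _ => I) U
  (f := fun p => ((p.1 j, p.2 j), p.1)).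
by apply: eq_unif_cvg => [n|] [xi eta] /= xe; rewrite upd_id upd_off1.
Qed.

Definition mix L xi eta : config := fun k => if k \in L then eta k else xi k.

Lemma rho_unifU L1 L2 :
  rho_unif_on L1 -> rho_unif_on L2 -> rho_unif_on (L1 `|` L2)%fset.
Proof.
move=> U1 U2.
have off1 p : offp (L1 `|` L2)%fset p -> offp L1 (p.1, mix L1 p.1 p.2).
  by move=> _ k /= /negbTE; rewrite /mix => ->.
have off2 p : offp (L1 `|` L2)%fset p -> offp L2 (mix L1 p.1 p.2, p.2).
  move=> xe k /= kL2; rewrite /mix; case: ifP => // kL1.
  by apply: xe; rewrite in_fsetU kL1 (negbTE kL2).
have U := unif_cvgD (unif_cvg_comp off1 U1) (unif_cvg_comp off2 U2).
apply: unif_cvg_limn; apply: eq_unif_cvg U => // n p _.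
by rewrite -psum_dphi_split.
Qed.

Lemma rho_unifP L : rho_unif_on L.
Proof.
elim/fset1U_rect: L => [|j L _ UL]; last exact: rho_unifU (rho_unif1 j) UL.
by apply: unif_cvg_sub (rho_unif1 0) => p; apply: off_sub; exact: fsub0set.
Qed.

Lemma rho_cvg L xi eta : off L xi eta -> psum (dphi xi eta) n @[n --> \oo] --> rho phi xi eta.
Proof. exact: (unif_cvg_cvg (rho_unifP L) (x := (xi, eta))). Qed.

Lemma rho_cocycle L1 L2 u v w :
  off L1 u v -> off L2 v w -> rho phi u w = rho phi u v + rho phi v w.
Proof.
move=> uv vw; apply: cvg_lim => //.
under eq_fun do rewrite (psum_dphi_split u v w).
exact: cvgD (rho_cvg uv) (rho_cvg vw).
Qed.

Lemma rho_shift L xi eta : off L xi eta -> rho phi (shift xi) (shift eta) = rho phi xi eta.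
Proof.
move=> xe; have U := unif_cvgD (psum_dphi_shiftn L 1) (rho_unifP L).
rewrite -[RHS]add0r (unif_cvg_lim U (x := (xi, eta))) //=.
by under eq_fun do rewrite subrK.
Qed.

Lemma rho_bounded L : exists B, forall xi eta, off L xi eta -> `|rho phi xi eta| <= B.
Proof.
have [M phiM] := cont_bounded phi_cont; have [N UN] := rho_unifP L ltr01.
exists ((2 * N).+1%:R * (M + M) + 1) => xi eta xe.
have := UN N (leqnn N) (xi, eta) xe; rewrite /= distrC => close.
have : `|psum (dphi xi eta) N| <= (2 * N).+1%:R * (M + M).
  by apply: psum_bound => i; apply: le_trans (ler_normB _ _) _; exact: lerD.
have := ler_normD (rho phi xi eta - psum (dphi xi eta) N) (psum (dphi xi eta) N).
rewrite subrK; lra.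
Qed.

Lemma cont_rho_glue L (z : {ffun L -> E}) : cont (fun w => rho phi (glue z w) w).
Proof.
apply: (cont_unif_lim (F := fun n w => psum (dphi (glue z w) w) n)).
  move=> n; apply: cont_sum => i; apply: cont_sub; apply: cont_comp phi_cont _.
    exact: window_local_comp (window_local_shiftn _ _) (window_local_glue z).
  exact: window_local_shiftn.
exact: (unif_cvg_comp (Q := fun _ => True) (f := fun w => (glue z w, w))
  (fun w _ => off_glue z w) (rho_unifP L)).
Qed.

End Cocycle.

Section ExchangeAndShift.
Variable E : finType.
Local Notation config := (config E).
Implicit Types (u v w : config) (L D : {fset int}).

(* The involution behind consistency: it swaps the outer configuration x w with
   the inner one y x w. *)
Definition exchange L D w (p : {ffun L -> E} * {ffun D -> E}) :=
  (restr L (glue p.2 (glue p.1 w)), restr D (glue p.1 w)).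

Section Exchange.
Variables (L D : {fset int}) (w : config).
Hypothesis DL : fsubset D L.
Implicit Type p : {ffun L -> E} * {ffun D -> E}.

Lemma glue_exchange1 p : glue (exchange w p).1 w = glue p.2 (glue p.1 w).
Proof.
apply: glue_restr; apply: off_sub (off_trans (off_glue _ _) (off_glue _ _)).
by rewrite fsubUset DL fsubset_refl.
Qed.

Lemma glue_exchange2 p : glue (exchange w p).2 (glue (exchange w p).1 w) = glue p.1 w.
Proof. by rewrite glue_exchange1 glue_glue glue_restr. Qed.

Lemma exchangeK : involutive (@exchange L D w).
Proof.
move=> [x y]; rewrite {1}/exchange glue_exchange2 glue_exchange1.
by rewrite !restr_glue.
Qed.

End Exchange.

Definition succ_fset L := [fset (k + 1)%R | k in L]%fset.

Lemma mem_succ_fset L k : (k \in succ_fset L) = (k - 1 \in L).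
Proof.
apply/imfsetP/idP => [[x xL ->]|kL]; first by rewrite addrK.
by exists (k - 1) => //; rewrite subrK.
Qed.

Lemma shiftK v : shiftn (-1) (shift v) = v.
Proof. by rewrite /shift shiftnD addNr shiftn0. Qed.

Lemma shiftVK v : shift (shiftn (-1) v) = v.
Proof. by rewrite /shift shiftnD addrN shiftn0. Qed.

Lemma off_shift L u v : off (succ_fset L) u v -> off L (shift u) (shift v).
Proof. by move=> uv k kL; apply: uv; rewrite mem_succ_fset addrK. Qed.

Lemma off_shiftV L u v : off L u v -> off (succ_fset L) (shiftn (-1) u) (shiftn (-1) v).
Proof. by move=> uv k; rewrite mem_succ_fset => kL; exact: uv. Qed.

End ExchangeAndShift.

Section GibbsSpecification.
Variables (E : finType) (R : realType) (phi : config E -> R).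
Hypotheses (phi_cont : cont phi) (phi_ext : ext_prop phi).
Local Notation config := (config E).
Local Notation gamma := (gammaphi phi).
Implicit Types (u v w : config) (L D : {fset int}).

Definition partition_fn L u w : R := \sum_(z : {ffun L -> E}) expR (rho phi (glue z u) w).

Lemma partition_fn_gt0 L u w : 0 < partition_fn L u w.
Proof.
rewrite /partition_fn (bigD1 (restr L w)) //=.
by apply: ltr_pwDl (expR_gt0 _) _; apply: sumr_ge0 => z _; exact: expR_ge0.
Qed.

Lemma partition_fn_glue L (x : {ffun L -> E}) u w :
  partition_fn L (glue x u) w = partition_fn L u w.
Proof. by apply: eq_bigr => z _; rewrite glue_glue. Qed.

Lemma gammaphiE L' L v w : off L' v w ->
  gamma L v = expR (rho phi v w) / partition_fn L v w.
Proof.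
move=> vw; rewrite /gammaphi /partition_fn.
have cocycle z : expR (rho phi (glue z v) v) = expR (rho phi (glue z v) w) * expR (- rho phi v w).
  by rewrite -expRD (rho_cocycle phi_cont phi_ext (off_glue z v) vw) addrK.
under eq_bigr do rewrite cocycle.
by rewrite -mulr_suml invfM expRN invrK mulrC.
Qed.

Lemma gammaphi_glue L (x : {ffun L -> E}) w :
  gamma L (glue x w) = expR (rho phi (glue x w) w) / partition_fn L w w.
Proof. by rewrite (gammaphiE _ (off_glue x w)) partition_fn_glue. Qed.

Lemma gammaphi_normalized L w : \sum_(x : {ffun L -> E}) gamma L (glue x w) = 1.
Proof.
under eq_bigr do rewrite gammaphi_glue.
by rewrite -mulr_suml divff // lt0r_neq0 // partition_fn_gt0.
Qed.

Lemma gammaphi_consistent L D : fsubset D L -> forall (f : config -> R) w,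
  \sum_(x : {ffun L -> E}) gamma L (glue x w) * cond_exp gamma D f (glue x w)
  = cond_exp gamma L f w.
Proof.
move=> DL f w.
pose W v := expR (rho phi v w); pose Z := partition_fn L w w.
pose N u := partition_fn D u w.
have gammaD x (y : {ffun D -> E}) :
    gamma D (glue y (glue x w)) = W (glue y (glue x w)) / N (glue x w).
  by rewrite (gammaphiE _ (off_trans (off_glue y _) (off_glue x w))) partition_fn_glue.
pose T (x : {ffun L -> E}) (y : {ffun D -> E}) :=
  W (glue x w) / Z * (W (glue y (glue x w)) / N (glue x w) * f (glue y (glue x w))).
pose T' (x : {ffun L -> E}) (y : {ffun D -> E}) :=
  W (glue y (glue x w)) / Z * (W (glue x w) / N (glue x w) * f (glue x w)).
have -> : \sum_(x : {ffun L -> E}) gamma L (glue x w) * cond_exp gamma D f (glue x w)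
    = \sum_(p : {ffun L -> E} * {ffun D -> E}) T p.1 p.2.
  rewrite -(pair_bigA _ T); apply: eq_bigr => x _; rewrite /cond_exp mulr_sumr.
  by apply: eq_bigr => y _; rewrite gammaphi_glue gammaD.
have -> : \sum_(p : {ffun L -> E} * {ffun D -> E}) T p.1 p.2
    = \sum_(p : {ffun L -> E} * {ffun D -> E}) T' p.1 p.2.
  rewrite (reindex_inj (inv_inj (exchangeK w DL))); apply: eq_bigr => p _.
  by rewrite /T /T' glue_exchange2 // glue_exchange1 // /N !partition_fn_glue.
rewrite -(pair_bigA _ T') /cond_exp; apply: eq_bigr => x _.
rewrite /T' -!mulr_suml gammaphi_glue.
have -> : \sum_(y : {ffun D -> E}) W (glue y (glue x w)) = N (glue x w) by [].
have N0 : N (glue x w) != 0 by rewrite lt0r_neq0 // partition_fn_gt0.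
have Z0 : Z != 0 by rewrite lt0r_neq0 // partition_fn_gt0.
by rewrite -/(W (glue x w)) -/Z; field; rewrite N0 Z0.
Qed.

Lemma gammaphi_specification : is_specification gamma.
Proof.
split; [|exact: gammaphi_normalized|exact: gammaphi_consistent].
by move=> L w; rewrite /gammaphi invr_ge0; apply: sumr_ge0 => z _; exact: expR_ge0.
Qed.

Lemma gammaphi_non_null : non_null gamma.
Proof.
move=> L; have [B rhoB] := rho_bounded phi_cont phi_ext L.
pose Z := #|{ffun L -> E}|%:R * expR B.
have Z0 : 0 <= Z by rewrite mulr_ge0 ?expR_ge0.
exists (Z + 1)^-1; split => [|w]; first by rewrite invr_gt0; lra.
rewrite /gammaphi lef_pV2 ?posrE -?/(partition_fn L w w) ?partition_fn_gt0 //; last lra.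
have -> : Z = \sum_(z : {ffun L -> E}) expR B by rewrite /Z sumr_const mulr_natl.
apply: le_trans (_ : _ <= \sum_(z : {ffun L -> E}) expR B) _; last by rewrite lerDl.
apply: ler_sum => z _.
by rewrite ler_expR; apply: le_trans (ler_norm _) _; apply: rhoB; exact: off_glue.
Qed.

Lemma gammaphi_continuous : spec_continuous gamma.
Proof.
move=> L; apply: (cont_continuous_comp (h := GRing.inv) (f := fun w => partition_fn L w w)).
  apply: cont_sum => z; apply: (cont_continuous_comp (h := expR)).
    exact: cont_rho_glue.
  by move=> w; exact: continuous_expR.
by move=> w; apply: inv_continuous; rewrite lt0r_neq0 // partition_fn_gt0.
Qed.

Lemma gammaphi_translation_invariant : translation_invariant gamma.
Proof.
move=> L w; rewrite -/(succ_fset L).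
pose f1 (x : {ffun L -> E}) := restr (succ_fset L) (shiftn (-1) (glue x (shift w))).
pose f2 (y : {ffun succ_fset L -> E}) := restr L (shift (glue y w)).
have glue_f1 x : glue (f1 x) w = shiftn (-1) (glue x (shift w)).
  by rewrite glue_restr // -{2}(shiftK w); exact/off_shiftV/off_glue.
have glue_f2 y : glue (f2 y) (shift w) = shift (glue y w).
  by rewrite glue_restr //; exact/off_shift/off_glue.
have f1K : cancel f1 f2 by move=> x; rewrite /f2 glue_f1 shiftVK restr_glue.
have f2K : cancel f2 f1 by move=> y; rewrite /f1 glue_f2 shiftK restr_glue.
rewrite /gammaphi (reindex f1); last exact/onW_bij/(Bijective f1K f2K).
congr (_^-1); apply: eq_bigr => x _.
by rewrite -(rho_shift phi_cont phi_ext (off_glue (f1 x) w)) glue_f1 shiftVK.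
Qed.

Lemma gammaphi_TI_gibbsian : TI_gibbsian gamma.
Proof.
split; last exact: gammaphi_translation_invariant.
split; [exact: gammaphi_specification | exact: gammaphi_non_null | exact: gammaphi_continuous].
Qed.

End GibbsSpecification.

Section SpecificationPotential.
Variables (E : finType) (R : realType) (gam : {fset int} -> config E -> R).
Hypotheses (gam_spec : is_specification gam) (gam_non_null : non_null gam).
Hypotheses (gam_cont : spec_continuous gam) (gam_TI : translation_invariant gam).
Local Notation config := (config E).
Implicit Types (u v w xi eta : config) (L D : {fset int}).

Lemma gam_gt0 L w : 0 < gam L w.
Proof. by have [c [c0 gamc]] := gam_non_null L; exact: lt_le_trans c0 (gamc w). Qed.

Definition indicator xi v : R := if `[< v = xi >] then 1 else 0.

Lemma cond_exp_indicator D u xi :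
  cond_exp gam D (indicator xi) u = if `[< off D u xi >] then gam D xi else 0.
Proof.
rewrite /cond_exp; case: asboolP => [uxi|not_uxi].
  have glue_xi : glue (restr D xi) u = xi by apply: glue_restr; exact: off_sym.
  rewrite (bigD1 (restr D xi)) //= glue_xi /indicator asboolT // mulr1.
  rewrite big1 ?addr0 // => x xxi; rewrite asboolF ?mulr0 // => glue_x.
  by move: xxi; rewrite -glue_x restr_glue eqxx.
rewrite big1 // => x _; rewrite /indicator asboolF ?mulr0 // => glue_xi.
by apply: not_uxi; rewrite -glue_xi; exact/off_sym/off_glue.
Qed.

Lemma gam_factor L D xi u : fsubset D L -> off D u xi ->
  gam L u = gam D u * \sum_(x : {ffun L -> E} | `[< off D (glue x xi) xi >]) gam L (glue x xi).
Proof.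
move=> DL uxi; have [_ _ consistent] := gam_spec.
have := consistent L D DL (indicator u) u; rewrite cond_exp_indicator asboolT // => <-.
have glue_u (x : {ffun L -> E}) : glue x u = glue x xi by exact/glue_off/(off_sub DL).
rewrite [in RHS]big_mkcond mulr_sumr; apply: eq_bigr => x _; rewrite cond_exp_indicator glue_u.
have -> : `[< off D (glue x xi) u >] = `[< off D (glue x xi) xi >].
  by apply/asboolP/asboolP => xu k kD; rewrite xu // ?uxi // -uxi.
by case: ifP; rewrite ?mulr0 // mulrC.
Qed.

Lemma ln_gam_sub L D xi eta : fsubset D L -> off D xi eta ->
  ln (gam L xi) - ln (gam L eta) = ln (gam D xi) - ln (gam D eta).
Proof.
move=> DL xe; have gxi := gam_factor DL (off_refl (L := D) xi).
have geta := gam_factor DL (off_sym xe).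
set S := \sum_(x | _) _ in gxi geta.
have S0 : 0 < S by have := gam_gt0 L xi; rewrite gxi pmulr_rgt0 // gam_gt0.
by rewrite gxi geta !lnM ?posrE ?gam_gt0 //; ring.
Qed.

Lemma cont_ln_gam L : cont (fun w => ln (gam L w)).
Proof.
apply: cont_continuous_comp (gam_cont L) _ => w.
exact/continuous_ln/gam_gt0.
Qed.

Lemma gam1_succ i w : gam [fset (i + 1)%R]%fset w = gam [fset i]%fset (shift w).
Proof.
rewrite -gam_TI; congr gam; apply/fsetP => k.
by rewrite -/(succ_fset _) mem_succ_fset !in_fset1 subr_eq.
Qed.

Lemma gam1_shiftn i w : gam [fset i]%fset w = gam [fset 0]%fset (shiftn i w).
Proof.
suff gam1_nat (n : nat) v : gam [fset n%:Z]%fset v = gam [fset 0]%fset (shiftn n v) /\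
    gam [fset (- n%:Z)%R]%fset v = gam [fset 0]%fset (shiftn (- n%:Z) v).
  by case: i => n; [exact: (gam1_nat n w).1 | rewrite NegzE; exact: (gam1_nat n.+1 w).2].
elim: n v => [|n IH] v; first by rewrite oppr0 shiftn0.
split.
  by rewrite -addn1 PoszD gam1_succ (IH _).1 /shift shiftnD.
have -> : - n.+1%:Z = - n%:Z - 1 by lia.
by rewrite -[v in LHS]shiftVK -gam1_succ subrK (IH _).2 shiftnD.
Qed.

Variable a : E.
Local Notation phg := (phi_gamma gam a).

Definition cut_left i w : config := fun k => if k < i then a else w k.

Lemma cond_a_shiftn i w : cond_a a (shiftn i w) = shiftn i (cut_left i w).
Proof.
apply: funext => k; rewrite /cond_a /shiftn /cut_left.
by rewrite (_ : (k + i < i) = (k < 0)) //; apply/idP/idP; lia.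
Qed.

Lemma upd_cond_a_shiftn i w : upd (cond_a a (shiftn i w)) 0 a = shiftn i (cut_left (i + 1) w).
Proof.
apply: funext => k; rewrite /upd /cond_a /shiftn /cut_left.
case: ifP => [/eqP k0|/negbT k0]; first by rewrite ifT //; lia.
by rewrite (_ : (k + i < i + 1) = (k < 0)) //; apply/idP/idP; lia.
Qed.

Lemma off_cut_left i w : off [fset i]%fset (cut_left i w) (cut_left (i + 1) w).
Proof. by move=> k; rewrite in_fset1 /cut_left => /eqP ki; do 2 case: ifP => //; lia. Qed.

Lemma phi_gamma_shiftn L i w : i \in L ->
  phg (shiftn i w) = ln (gam L (cut_left i w)) - ln (gam L (cut_left (i + 1) w)).
Proof.
move=> iL; rewrite /phi_gamma upd_cond_a_shiftn cond_a_shiftn -!gam1_shiftn.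
by rewrite ln_div ?posrE ?gam_gt0 // (ln_gam_sub _ (off_cut_left (i := i) w)) // fsub1set.
Qed.

Lemma psum_phi_gamma L (K n : nat) xi eta :
  (forall k, k \in L -> `|k| <= K%:Z) -> (K <= n)%N -> off L xi eta ->
  psum (dphi phg xi eta) n
  = ln (gam L (cut_left (- n%:Z) xi)) - ln (gam L (cut_left (- n%:Z) eta)).
Proof.
(* Enlarging L to L' containing the window writes every summand with the same gamma_L',
   so that the sum telescopes. *)
move=> LK Kn xe; set L' := (L `|` [fset k in window n])%fset.
have L'win (i : 'I_(2 * n).+1) : i%:Z - n%:Z \in L'.
  by rewrite in_fsetU in_fset mem_window ?orbT //; have := ltn_ord i; lia.
pose u w (i : nat) := ln (gam L' (cut_left (i%:Z - n%:Z) w)).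
have -> : psum (dphi phg xi eta) n
    = \sum_(0 <= i < (2 * n).+1) ((u eta i.+1 - u eta i) - (u xi i.+1 - u xi i)).
  rewrite big_mkord; apply: eq_bigr => i _.
  rewrite /dphi (phi_gamma_shiftn xi (L'win i)) (phi_gamma_shiftn eta (L'win i)) /u.
  by rewrite (_ : i.+1%:Z - n%:Z = i%:Z - n%:Z + 1); [ring | lia].
rewrite sumrB !telescope_sumr // /u.
have -> : cut_left ((2 * n).+1%:Z - n%:Z) eta = cut_left ((2 * n).+1%:Z - n%:Z) xi.
  apply: funext => k; rewrite /cut_left; case: ifP => // nk.
  by apply/esym/xe; apply/negP => /LK; lia.
have cut_off : off L (cut_left (- n%:Z) xi) (cut_left (- n%:Z) eta).
  by move=> k kL; rewrite /cut_left; case: ifP => //; rewrite xe.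
have := ln_gam_sub (fsubsetUl L [fset k in window n]%fset) cut_off.
rewrite sub0r; lra.
Qed.

Lemma phi_gamma_unif L : unif_cvg (offp L) (fun n p => psum (dphi phg p.1 p.2) n)
  (fun p => ln (gam L p.1) - ln (gam L p.2)).
Proof.
move=> eps eps0; have [K LK] := fset_bound L.
have [N lnN] := cont_uniform (cont_ln_gam L) (eps := eps / 2) ltac:(lra).
exists (maxn K N) => n; rewrite geq_max => /andP[Kn Nn] [xi eta] /= xe.
rewrite (psum_phi_gamma LK Kn xe).
have cutN w : agree N (cut_left (- n%:Z) w) w.
  by move=> k kN; rewrite /cut_left ifF //; lia.
have := lnN _ _ (cutN xi); have := lnN _ _ (cutN eta).
set x1 := ln (gam L (cut_left _ xi)); set x2 := ln (gam L (cut_left _ eta)).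
have := ler_normB (x1 - ln (gam L xi)) (x2 - ln (gam L eta)).
have -> : x1 - ln (gam L xi) - (x2 - ln (gam L eta)) = x1 - x2 - (ln (gam L xi) - ln (gam L eta)).
  by ring.
lra.
Qed.

Lemma phi_gamma_cont : cont phg.
Proof.
have -> : phg = fun w => ln (gam [fset 0]%fset (cond_a a w))
                         - ln (gam [fset 0]%fset (upd (cond_a a w) 0 a)).
  by apply: funext => w; rewrite /phi_gamma ln_div ?posrE ?gam_gt0.
apply: cont_sub; apply: cont_comp (cont_ln_gam _) _; first exact: window_local_cond_a.
exact: window_local_comp (window_local_upd _ _) (window_local_cond_a _).
Qed.

Lemma phi_gamma_ext : ext_prop phg.
Proof.
move=> a' b.
exists (fun w => ln (gam [fset 0]%fset (upd w 0 a')) - ln (gam [fset 0]%fset (upd w 0 b))).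
move=> eps eps0; have [N phgN] := phi_gamma_unif [fset 0]%fset eps0.
by exists N => n Nn w; apply: (phgN n Nn (_, _)); exact: off_upd.
Qed.

Lemma gammaphi_phi_gamma L w : gammaphi phg L w = gam L w.
Proof.
have rhoE (z : {ffun L -> E}) : rho phg (glue z w) w = ln (gam L (glue z w)) - ln (gam L w).
  exact/esym/(unif_cvg_lim (phi_gamma_unif L) (x := (_, _)))/off_glue.
rewrite /gammaphi; under eq_bigr do rewrite rhoE expRD expRN !lnK ?posrE ?gam_gt0 //.
by have [_ normalized _] := gam_spec; rewrite -mulr_suml normalized mul1r invrK.
Qed.

End SpecificationPotential.

Unset Implicit Arguments.

Theorem theorem4p2 (E : finType) (R : realType) (a : E) :
  (forall phi : config E -> R, cont phi -> ext_prop phi ->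
     TI_gibbsian (gammaphi phi)) /\
  (forall gam : {fset int} -> config E -> R, TI_gibbsian gam ->
     [/\ cont (phi_gamma gam a), ext_prop (phi_gamma gam a) &
         forall (L : {fset int}) (w : config E),
           gammaphi (phi_gamma gam a) L w = gam L w]).
Proof.
split=> [phi phi_cont phi_ext | gam [[gam_spec gam_non_null gam_cont] gam_TI]].
  exact: gammaphi_TI_gibbsian.
split; [exact: phi_gamma_cont | exact: phi_gamma_ext | exact: gammaphi_phi_gamma].
Qed.
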